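(* Let $X$ be a compact metric space and $f:X\to X$ a local homeomorphism. Suppose there is a full zip shift map $\sigma_\tau:\Sigma\to\Sigma$ and a homeomorphism $\phi:X\to\Sigma$ with $f=\phi^{-1}\circ\sigma_\tau\circ\phi$. Then $f$ is expansive.
   Context: Given finite nonempty alphabets $S,Z$ with $\#Z\le\#S$ and a surjection $\tau:S\to Z$, the zip shift space $\Sigma=\Sigma_{Z,S}$ is the set of bi-infinite sequences $x=(x_i)_{i\in\mathbb{Z}}$ with $x_i\in S$ for $i\ge0$ and $x_i\in Z$ for $i<0$, with metric $d(x,y)=2^{-M(x,y)}$, $M(x,y)=\min\{|i|:x_i\neq y_i\}$; the zip shift map is $(\sigma_\tau x)_i=x_{i+1}$ for $i\neq-1$, $(\sigma_\tau x)_{-1}=\tau(x_0)$. A local homeomorphism $f:X\to X$ of a compact metric space $(X,d_X)$ is expansive if there is $e>0$ such that for any $x\neq y$ in $X$ there exists $n\in\mathbb{Z}$ with $d_X(f^n(x),f^n(y))>e$, where for $n<0$, $f^n(x)$, $f^n(y)$ denote the sets of $|n|$-th preimages and the distance is the minimum distance between these sets. *)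

From Stdlib Require Import Reals ZArith List ClassicalDescription.
From mathcomp Require Import all_boot.

Set Implicit Arguments.
Unset Strict Implicit.
Unset Printing Implicit Defensive.

Local Open Scope R_scope.

Definition is_metric (X : Type) (d : X -> X -> R) : Prop :=
  (forall x y, 0 <= d x y) /\
  (forall x y, d x y = 0 <-> x = y) /\
  (forall x y, d x y = d y x) /\
  (forall x y z, d x z <= d x y + d y z).

Definition mopen (X : Type) (d : X -> X -> R) (U : X -> Prop) : Prop :=
  forall x, U x -> exists r, 0 < r /\ forall y, d x y < r -> U y.

Definition mcompact (X : Type) (d : X -> X -> R) : Prop :=
  forall (I : Type) (U : I -> X -> Prop),
    (forall i, mopen d (U i)) -> (forall x, exists i, U i x) ->
    exists l : list I, forall x, exists i, In i l /\ U i x.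

Definition mcont_on (X Y : Type) (dX : X -> X -> R) (dY : Y -> Y -> R)
  (A : X -> Prop) (g : X -> Y) : Prop :=
  forall x, A x -> forall eps, 0 < eps -> exists delta, 0 < delta /\
    forall y, A y -> dX x y < delta -> dY (g x) (g y) < eps.

Definition mcont (X Y : Type) (dX : X -> X -> R) (dY : Y -> Y -> R)
  (g : X -> Y) : Prop := mcont_on dX dY (fun _ => True) g.

Definition homeomorphism (X Y : Type) (dX : X -> X -> R) (dY : Y -> Y -> R)
  (phi : X -> Y) : Prop :=
  exists psi : Y -> X,
    (forall x, psi (phi x) = x) /\ (forall y, phi (psi y) = y) /\
    mcont dX dY phi /\ mcont dY dX psi.

Definition local_homeomorphism (X : Type) (d : X -> X -> R) (f : X -> X) : Prop :=
  forall x, exists (U V : X -> Prop) (g : X -> X),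
    mopen d U /\ mopen d V /\ U x /\
    (forall y, U y -> V (f y)) /\
    (forall y, U y -> g (f y) = y) /\
    (forall z, V z -> U (g z) /\ f (g z) = z) /\
    mcont_on d d U f /\ mcont_on d d V g.

(* For n >= 0 we compare f^n x and
   f^n y; for n < 0 we compare the sets of |n|-th preimages, the distance
   between sets being the infimum of pointwise distances:
   "dist(A,B) > e" iff there is e' > e with d a b >= e' for all a in A, b in B. *)
Definition iterate_dist_gt (X : Type) (d : X -> X -> R) (f : X -> X)
  (e : R) (n : Z) (x y : X) : Prop :=
  if (0 <=? n)%Z then d (iter (Z.to_nat n) f x) (iter (Z.to_nat n) f y) > e
  else exists e', e' > e /\
    forall a b, iter (Z.to_nat (- n)) f a = x ->
                iter (Z.to_nat (- n)) f b = y -> d a b >= e'.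

Definition expansive (X : Type) (d : X -> X -> R) (f : X -> X) : Prop :=
  exists e, 0 < e /\
    forall x y, x <> y -> exists n : Z, iterate_dist_gt d f e n x y.

(* A point x = (x_i)_{i in Z} of Sigma_{Z,S} is represented by the pair
   (xn, xp) with xp k = x_k (k >= 0, in S) and xn k = x_{-(k+1)} (in Z). *)
Definition zip_space (S Z : finType) : Type := ((nat -> Z) * (nat -> S))%type.

Definition zip_disagree (S Z : finType) (x y : zip_space S Z) : pred nat :=
  fun m => (x.2 m != y.2 m) || ((0 < m)%N && (x.1 m.-1 != y.1 m.-1)).

(* d(x,y) = 2^{-M(x,y)}, M(x,y) = min{|i| : x_i <> y_i}; d(x,x) = 0. *)
Definition zip_dist (S Z : finType) (x y : zip_space S Z) : R :=
  match excluded_middle_informative (exists m, zip_disagree x y m) with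
  | left h => (/ 2) ^ (ex_minn h)
  | right _ => 0
  end.

(* (sigma_tau x)_i = x_{i+1} for i <> -1, (sigma_tau x)_{-1} = tau(x_0). *)
Definition zip_shift (S Z : finType) (tau : S -> Z) (x : zip_space S Z)
  : zip_space S Z :=
  (fun k => match k with 0 => tau (x.2 0%N) | k'.+1 => x.1 k' end,
   fun k => x.2 k.+1).

From Stdlib Require Import Reals ZArith.
From mathcomp Require Import all_boot.
From Stdlib Require Import Lra Lia FunctionalExtensionality List Classical ClassicalDescription.

(* The symbol x_0 depends continuously on x, so by compactness there is E > 0
   such that points of X at distance < E have conjugates with the same x_0.
   Two distinct points of X have conjugates differing at some coordinate: at a
   coordinate k >= 0, the k-th iterates already differ in x_0 and are E apart;
   at a coordinate -(k+1), every pair of (k+1)-th preimages differs in x_0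
   (it is mapped to that coordinate through tau), so those preimages are all
   E apart.  Hence E/2 is an expansivity constant. *)

Local Open Scope R_scope.

Lemma list_lower_bound_pos {A : Type} (r : A -> R) (l : list A) :
  (forall i, In i l -> 0 < r i) ->
  exists E, 0 < E /\ forall i, In i l -> E <= r i.
Proof.
elim: l => [|j l IH] rP; first by exists 1; split=> //; lra.
have [E [EP EL]] : exists E, 0 < E /\ forall i, In i l -> E <= r i.
  by apply: IH => i il; apply: rP; right.
exists (Rmin (r j) E); split; first by apply: Rmin_pos => //; apply: rP; left.
move=> i [<-|il]; first exact: Rmin_l.
exact: Rle_trans (Rmin_r _ _) (EL i il).
Qed.

Section CompactMetric.

Variables (X : Type) (d : X -> X -> R).
Hypothesis d_refl : forall x, d x x = 0.
Hypothesis d_triangle : forall x y z, d x z <= d x y + d y z.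

Lemma mopen_ball c r : mopen d (fun y => d c y < r).
Proof.
move=> y cy; exists (r - d c y); split; first lra.
by move=> z yz; have := d_triangle c y z; lra.
Qed.

Lemma compact_locally_constant_uniform (T : Type) (g : X -> T) :
  mcompact d ->
  (forall x, exists r, 0 < r /\ forall y, d x y < r -> g y = g x) ->
  exists E, 0 < E /\ forall a b, d a b < E -> g a = g b.
Proof.
move=> Xcompact g_loc.
pose I := {p : X * R | 0 < p.2 /\ forall y, d p.1 y < p.2 -> g y = g p.1}.
pose U (i : I) y := d (sval i).1 y < (sval i).2 / 2.
have [|l cover_l] := Xcompact I U (fun i => mopen_ball _ _).
  move=> x; have [r [rP gr]] := g_loc x.
  by exists (exist _ (x, r) (conj rP gr)); rewrite /U /= d_refl; lra.
have half_radius_pos (i : I) : 0 < (sval i).2 / 2.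
  by case: (svalP i) => rP _; lra.
have [E [EP E_le]] := list_lower_bound_pos (fun i : I => (sval i).2 / 2) l
  (fun i _ => half_radius_pos i).
exists E; split=> // a b ab.
have [i [il Ua]] := cover_l a.
move: (E_le i il) Ua; rewrite /U; case: i {il} => [[c r] [_ gr]] /= Er ca.
have ca_r : d c a < r by lra.
have cb_r : d c b < r by have := d_triangle c a b; lra.
by rewrite (gr a ca_r) (gr b cb_r).
Qed.

End CompactMetric.

Lemma iterate_dist_gt_nat {X : Type} (d : X -> X -> R) (f : X -> X) e k x y :
  d (iter k f x) (iter k f y) > e -> iterate_dist_gt d f e (Z.of_nat k) x y.
Proof.
rewrite /iterate_dist_gt Nat2Z.id.
by have -> : (0 <=? Z.of_nat k)%Z = true by apply/Z.leb_le; lia.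
Qed.

Lemma iterate_dist_gt_preimages {X : Type} (d : X -> X -> R) (f : X -> X)
    e e' k x y :
  e' > e ->
  (forall a b, iter k.+1 f a = x -> iter k.+1 f b = y -> d a b >= e') ->
  iterate_dist_gt d f e (- Z.of_nat k.+1) x y.
Proof.
move=> e'e sep; rewrite /iterate_dist_gt Z.opp_involutive Nat2Z.id.
have -> : (0 <=? - Z.of_nat k.+1)%Z = false by apply/Z.leb_gt; lia.
by exists e'.
Qed.

Lemma iter_conj {A B : Type} {phi : A -> B} {f : A -> A} {g : B -> B} :
  (forall x, phi (f x) = g (phi x)) ->
  forall n x, phi (iter n f x) = iter n g (phi x).
Proof. by move=> fg; elim=> [|n IH] x //=; rewrite fg IH. Qed.

Section ZipShift.

Variables (S Z : finType) (tau : S -> Z).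

Definition zip_head (u : zip_space S Z) : S := u.2 0%N.

Lemma zip_dist_lt1_head (u v : zip_space S Z) :
  zip_dist u v < 1 -> zip_head u = zip_head v.
Proof.
move=> lt1; apply/eqP/negPn/negP => uv; move: lt1; rewrite /zip_dist.
have dis0 : zip_disagree u v 0%N by rewrite /zip_disagree uv.
case: excluded_middle_informative => [h|]; last by case; exists 0%N.
case: ex_minnP => m _ /(_ 0%N dis0); rewrite leqn0 => /eqP -> /=; lra.
Qed.

Lemma zip_space_ext (u v : zip_space S Z) :
  (forall k, u.1 k = v.1 k) -> (forall k, u.2 k = v.2 k) -> u = v.
Proof.
move=> e1 e2; rewrite [u]surjective_pairing [v]surjective_pairing.
by rewrite (functional_extensionality _ _ e1) (functional_extensionality _ _ e2).
Qed.

Lemma zip_shift_iter_pos k (u : zip_space S Z) j :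
  (iter k (zip_shift tau) u).2 j = u.2 (j + k)%N.
Proof. by elim: k j => [|k IH] j /=; rewrite ?addn0 // IH addnS. Qed.

Lemma zip_head_iter k (u : zip_space S Z) :
  zip_head (iter k (zip_shift tau) u) = u.2 k.
Proof. by rewrite /zip_head zip_shift_iter_pos add0n. Qed.

Lemma zip_shift_iter_neg k (u : zip_space S Z) j :
  (iter k (zip_shift tau) u).1 (j + k)%N = u.1 j.
Proof. by elim: k j => [|k IH] j /=; rewrite ?addn0 // addnS /= IH. Qed.

Lemma zip_shift_iter_tau k (u : zip_space S Z) :
  (iter k.+1 (zip_shift tau) u).1 k = tau (zip_head u).
Proof. by rewrite iterSr -[k]add0n zip_shift_iter_neg. Qed.

Theorem expansive_conj_zip_shift (X : Type) (dX : X -> X -> R) (f : X -> X)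
    (phi : X -> zip_space S Z) :
  (forall x, dX x x = 0) -> (forall x y z, dX x z <= dX x y + dX y z) ->
  mcompact dX -> injective phi -> mcont dX (@zip_dist S Z) phi ->
  (forall x, phi (f x) = zip_shift tau (phi x)) ->
  expansive dX f.
Proof.
move=> d_refl d_triangle Xcompact phi_inj phi_cont phi_conj.
have phi_iter := iter_conj phi_conj.
have [E [EP head_sep]] : exists E, 0 < E /\
    forall a b, dX a b < E -> zip_head (phi a) = zip_head (phi b).
  apply: compact_locally_constant_uniform => // x.
  have [r [rP near]] := phi_cont x I 1 Rlt_0_1.
  by exists r; split=> // y xy; apply/esym/zip_dist_lt1_head/near.
have far : forall a b, zip_head (phi a) <> zip_head (phi b) -> dX a b >= E.
  by move=> a b ab; apply: Rnot_lt_ge => /head_sep.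
exists (E / 2); split; first lra.
move=> x y xy.
have [[k xyk]|same_pos] := classic (exists k, (phi x).2 k <> (phi y).2 k).
  exists (Z.of_nat k); apply: iterate_dist_gt_nat.
  have := far (iter k f x) (iter k f y).
  rewrite !phi_iter !zip_head_iter => /(_ xyk); lra.
have [[k xyk]|same_neg] := classic (exists k, (phi x).1 k <> (phi y).1 k).
  exists (- Z.of_nat k.+1)%Z.
  apply: (@iterate_dist_gt_preimages _ dX f _ E); first lra.
  move=> a b a_x b_y; apply: far => ab; apply: xyk.
  by rewrite -a_x -b_y !phi_iter !zip_shift_iter_tau ab.
case: xy; apply: phi_inj; apply: zip_space_ext => k; apply: NNPP => xyk.
- by apply: same_neg; exists k.
- by apply: same_pos; exists k.
Qed.

End ZipShift.

Theorem proposition2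
  (X : Type) (dX : X -> X -> R) (f : X -> X)
  (S Z : finType) (tau : S -> Z) (phi : X -> zip_space S Z) :
  is_metric dX -> mcompact dX -> local_homeomorphism dX f ->
  (0 < #|S|)%N -> (0 < #|Z|)%N -> (#|Z| <= #|S|)%N ->
  (forall z : Z, exists s : S, tau s = z) ->
  homeomorphism dX (@zip_dist S Z) phi ->
  (forall x, phi (f x) = zip_shift tau (phi x)) ->
  expansive dX f.
Proof.
move=> [_ [d_eq0 [_ d_triangle]]] Xcompact _ _ _ _ _.
move=> [psi [psiK [_ [phi_cont _]]]].
apply: expansive_conj_zip_shift => //; first by move=> x; apply/d_eq0.
exact: can_inj psiK.
Qed.
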